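(* Let $b\geq 2$ be fixed. For all sufficiently large $N$, \[ \frac{N^2}{16b^2}\leq\mathcal{S}_{1,2}(N)\leq\frac{N^2}{2}\qquad\text{and}\qquad \frac{N^2}{8b}\leq\mathcal{S}_{2,1}(N)\leq\frac{N^2}{2}. \] In particular $\mathcal{S}_{1,2}(N),\mathcal{S}_{2,1}(N)\asymp_b N^2$.
   Context: For a positive integer $n$ with $L$ digits in base $b$, $n=\sum_{0\leq i<L}\varepsilon_i(n)b^i$ ($\varepsilon_i(n)\in\{0,\dots,b-1\}$, $\varepsilon_{L-1}(n)\neq0$), its digital reverse is $\overleftarrow{n}=\sum_{0\leq i<L}\varepsilon_i(n)b^{L-1-i}$. For a positive integer $N$, \[ \mathcal{S}_{1,2}(N)=\sum_{\substack{n_1,n_2,n_3\leq N\\ n_1+n_2+n_3=N\\ (\overleftarrow{n_2}\,\overleftarrow{n_3},b)=1}}1,\qquad \mathcal{S}_{2,1}(N)=\sum_{\substack{n_1,n_2,n_3\leq N\\ n_1+n_2+n_3=N\\ (\overleftarrow{n_3},b)=1}}1, \] sums over positive integers $n_1,n_2,n_3$; $(\cdot,\cdot)$ is gcd. *)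

From mathcomp Require Import all_boot.
Set Implicit Arguments. Unset Strict Implicit. Unset Printing Implicit Defensive.

(* base-b digits of n, least significant first: [eps_0; eps_1; ...; eps_{L-1}];
   fuel n suffices since n decreases by at least a factor 2 when b >= 2. *)
Fixpoint digits_aux (b fuel n : nat) : seq nat :=
  match fuel with
  | 0 => [::]
  | fuel'.+1 => if n == 0 then [::] else (n %% b) :: digits_aux b fuel' (n %/ b)
  end.

Definition digits (b n : nat) : seq nat := digits_aux b n n.

(* digital reverse: sum_i eps_i(n) b^(L-1-i) *)
Definition digrev (b n : nat) : nat := foldl (fun acc d => acc * b + d) 0 (digits b n).

Definition S12 (b N : nat) : nat :=
  \sum_(1 <= n1 < N.+1) \sum_(1 <= n2 < N.+1) \sum_(1 <= n3 < N.+1)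
    ((n1 + n2 + n3 == N) && coprime (digrev b n2 * digrev b n3) b).

Definition S21 (b N : nat) : nat :=
  \sum_(1 <= n1 < N.+1) \sum_(1 <= n2 < N.+1) \sum_(1 <= n3 < N.+1)
    ((n1 + n2 + n3 == N) && coprime (digrev b n3) b).

From mathcomp Require Import all_boot zify.

(* Summing over n1 = N - n2 - n3 turns both counts into counts of pairs (n2, n3) with
   n2 + n3 < N and a coprimality condition; there are at most N^2/2 such pairs.  For
   the lower bounds take B = b^k with 4B <= N < 4bB.  Every n in [B, 2B) has leading
   digit 1, which is the last digit of its reverse, so the reverse is coprime to b.
   The pairs in [B, 2B)^2, resp. [1, N - 2B] x [B, 2B), then give at least
   B^2 > N^2/(16b^2), resp. (N - 2B)B >= NB/2 > N^2/(8b), admissible triples. *)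

Set Implicit Arguments.
Unset Strict Implicit.

Section DigitalReverse.

Variable b : nat.
Hypothesis b_gt1 : 1 < b.

Lemma digits_aux_lead k fuel n : b ^ k <= n < b ^ k.+1 -> n <= fuel ->
  exists s, digits_aux b fuel n = rcons s (n %/ b ^ k).
Proof.
elim: k fuel n => [|k IHk] [|fuel] n /andP [lo hi] le_n_fuel.
- by rewrite expn0 in lo; lia.
- rewrite expn0 expn1 divn1 in lo hi * => /=.
  have -> : n == 0 = false by lia.
  by exists [::]; rewrite modn_small // divn_small //; case: fuel le_n_fuel.
- by have := expn_gt0 b k.+1; lia.
- have n_gt0 : n != 0 by have := expn_gt0 b k.+1; lia.
  have [s Hs] : exists s, digits_aux b fuel (n %/ b) = rcons s (n %/ b %/ b ^ k).
    apply: IHk; first by rewrite leq_divRL ?ltn_divLR -?expnSr ?lo ?hi //; lia.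
    have : n %/ b < n by rewrite ltn_Pdiv // lt0n.
    lia.
  by exists (n %% b :: s); rewrite /= (negbTE n_gt0) Hs -divnMA -expnS.
Qed.

Lemma digrev_mod_lead k n : b ^ k <= n < b ^ k.+1 ->
  digrev b n = n %/ b ^ k %[mod b].
Proof.
move=> n_range; have [s Hs] := digits_aux_lead n_range (leqnn n).
by rewrite /digrev /digits Hs foldl_rcons modnMDl.
Qed.

Lemma coprime_digrev_lead1 k n : b ^ k <= n < 2 * b ^ k -> coprime (digrev b n) b.
Proof.
move=> /andP [lo hi]; have B_gt0 : 0 < b ^ k by rewrite expn_gt0 ltnW.
have lead1 : n %/ b ^ k = 1.
  by apply/eqP; rewrite eqn_leq -ltnS ltn_divLR ?leq_divRL; lia.
have n_range : b ^ k <= n < b ^ k.+1.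
  by rewrite lo (leq_trans hi) // expnS leq_mul2r b_gt1 orbT.
by rewrite -coprime_modl (digrev_mod_lead n_range) lead1 coprime_modl coprime1n.
Qed.

End DigitalReverse.

Lemma sum_add_eq m N M :
  \sum_(1 <= i < M.+1) (i + m == N) = (m < N) && (N - m <= M).
Proof.
elim: M => [|M IHM]; first by rewrite big_geq //; lia.
by rewrite big_nat_recr //= IHM; lia.
Qed.

Lemma sum_add_lt i N M : \sum_(1 <= j < M.+1) (i + j < N) = minn M (N - i.+1).
Proof.
elim: M => [|M IHM]; first by rewrite big_geq //; lia.
by rewrite big_nat_recr //= IHM; lia.
Qed.

Lemma double_sum_sub T M : M <= T ->
  2 * \sum_(1 <= i < M.+1) (T - i) = M * (2 * T - M - 1).
Proof.
elim: M => [|M IHM] le_MT; first by rewrite big_geq.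
by rewrite big_nat_recr //= mulnDr IHM; nia.
Qed.

Lemma sum_triples_eq (P : nat -> nat -> bool) N :
  \sum_(1 <= n1 < N.+1) \sum_(1 <= n2 < N.+1) \sum_(1 <= n3 < N.+1)
    ((n1 + n2 + n3 == N) && P n2 n3)
  = \sum_(1 <= n2 < N.+1) \sum_(1 <= n3 < N.+1) ((n2 + n3 < N) && P n2 n3).
Proof.
rewrite exchange_big; apply: eq_bigr => n2 _.
rewrite exchange_big; apply: eq_bigr => n3 _.
under eq_bigr => n1 _ do rewrite -addnA -mulnb.
by rewrite -big_distrl /= sum_add_eq mulnb; congr (_ && _); lia.
Qed.

Lemma double_sum_pairs_lt (P : nat -> nat -> bool) N :
  2 * \sum_(1 <= i < N.+1) \sum_(1 <= j < N.+1) ((i + j < N) && P i j) <= N ^ 2.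
Proof.
have le_inner i : \sum_(1 <= j < N.+1) ((i + j < N) && P i j) <= N - i.
  apply: (@leq_trans (minn N (N - i.+1))); last by lia.
  by rewrite -sum_add_lt; apply: leq_sum => j _; case: (P i j); rewrite ?andbT ?andbF.
apply: (@leq_trans (2 * \sum_(1 <= i < N.+1) (N - i))).
  by rewrite leq_mul2l /=; apply: leq_sum => i _; exact: le_inner.
by rewrite double_sum_sub //; nia.
Qed.

Lemma leq_sum_subrange m a c n (F : nat -> nat) : m <= a -> a <= c -> c <= n ->
  \sum_(a <= i < c) F i <= \sum_(m <= i < n) F i.
Proof.
move=> le_ma le_ac le_cn.
rewrite (@big_cat_nat _ _ _ a m n) ?(leq_trans le_ac) //.
by rewrite (@big_cat_nat _ _ _ c a n) //= addnCA leq_addr.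
Qed.

Lemma leq_box_sum (F : nat -> nat -> bool) m1 n1 m2 n2 a1 c1 a2 c2 :
  m1 <= a1 -> c1 <= n1 -> m2 <= a2 -> c2 <= n2 ->
  (forall i j, a1 <= i < c1 -> a2 <= j < c2 -> F i j) ->
  (c1 - a1) * (c2 - a2) <= \sum_(m1 <= i < n1) \sum_(m2 <= j < n2) F i j.
Proof.
move=> le_m1a1 le_c1n1 le_m2a2 le_c2n2 F_box.
have [le_c1a1|lt_a1c1] := leqP c1 a1; first by rewrite (eqnP le_c1a1).
have [le_c2a2|lt_a2c2] := leqP c2 a2; first by rewrite (eqnP le_c2a2) muln0.
have -> : (c1 - a1) * (c2 - a2) = \sum_(a1 <= i < c1) \sum_(a2 <= j < c2) 1.
  by rewrite sum_nat_const_nat sum_nat_const_nat muln1.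
apply: (leq_trans _ (leq_sum_subrange _ le_m1a1 (ltnW lt_a1c1) le_c1n1)).
rewrite big_nat_cond [X in _ <= X]big_nat_cond; apply: leq_sum => i /andP [i_range _].
apply: (leq_trans _ (leq_sum_subrange _ le_m2a2 (ltnW lt_a2c2) le_c2n2)).
rewrite big_nat_cond [X in _ <= X]big_nat_cond; apply: leq_sum => j /andP [j_range _].
by rewrite F_box.
Qed.

Lemma exists_pow_window b N : 1 < b -> 4 <= N ->
  exists k, 4 * b ^ k <= N < 4 * b ^ k.+1.
Proof.
move=> b_gt1 N_ge4; have N4_gt0 : 0 < N %/ 4 by rewrite divn_gt0.
exists (trunc_log b (N %/ 4)).
have := trunc_logP b_gt1 N4_gt0; have := trunc_log_ltn (N %/ 4) b_gt1; lia.
Qed.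

Lemma S12E b N : S12 b N =
  \sum_(1 <= n2 < N.+1) \sum_(1 <= n3 < N.+1)
    ((n2 + n3 < N) && coprime (digrev b n2 * digrev b n3) b).
Proof. exact: (sum_triples_eq (fun n2 n3 => coprime (digrev b n2 * digrev b n3) b)). Qed.

Lemma S21E b N : S21 b N =
  \sum_(1 <= n2 < N.+1) \sum_(1 <= n3 < N.+1) ((n2 + n3 < N) && coprime (digrev b n3) b).
Proof. exact: (sum_triples_eq (fun _ n3 => coprime (digrev b n3) b)). Qed.

Lemma S12_ge b k N : 1 < b -> 4 * b ^ k <= N -> (b ^ k) ^ 2 <= S12 b N.
Proof.
move=> b_gt1 le_N; have B_gt0 : 0 < b ^ k by rewrite expn_gt0 ltnW.
have -> : (b ^ k) ^ 2 = (b ^ k + b ^ k - b ^ k) * (b ^ k + b ^ k - b ^ k).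
  by rewrite addnK mulnn.
rewrite S12E; apply: leq_box_sum; try lia.
move=> i j i_range j_range.
by rewrite coprimeMl !(coprime_digrev_lead1 b_gt1 (k := k)) //; lia.
Qed.

Lemma S21_ge b k N : 1 < b -> 4 * b ^ k <= N -> (N - 2 * b ^ k) * b ^ k <= S21 b N.
Proof.
move=> b_gt1 le_N; have B_gt0 : 0 < b ^ k by rewrite expn_gt0 ltnW.
have -> : (N - 2 * b ^ k) * b ^ k = ((N - 2 * b ^ k).+1 - 1) * (b ^ k + b ^ k - b ^ k).
  by rewrite subn1 addnK.
rewrite S21E; apply: leq_box_sum; try lia.
move=> i j i_range j_range.
by rewrite (coprime_digrev_lead1 b_gt1 (k := k)) //; lia.
Qed.

Theorem lemma4p1 (b : nat) : 2 <= b ->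
  exists N0 : nat, forall N : nat, N0 <= N ->
    [/\ N ^ 2 <= 16 * b ^ 2 * S12 b N, 2 * S12 b N <= N ^ 2,
        N ^ 2 <= 8 * b * S21 b N & 2 * S21 b N <= N ^ 2].
Proof.
move=> b_gt1; exists 4 => N N_ge4.
have [k /andP [lo hi]] := exists_pow_window b_gt1 N_ge4.
rewrite expnS in hi; split.
- rewrite (leq_trans _ (leq_mul (leqnn _) (S12_ge b_gt1 lo))) //; nia.
- by rewrite S12E double_sum_pairs_lt.
- rewrite (leq_trans _ (leq_mul (leqnn _) (S21_ge b_gt1 lo))) //; nia.
- by rewrite S21E double_sum_pairs_lt.
Qed.
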